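(* There exist an ASCM $\mathcal{M}^*$ over $\{\mathbf{V},\mathbf{I}\}$ with causal diagram $\mathcal{G}$, sets $\mathbf{X}\subseteq\mathbf{W}\subseteq\mathbf{V}$, a value $\mathbf{x}'$ of $\mathbf{X}$, values $\mathbf{w},\mathbf{w}'$ of $\mathbf{W}$, and a variable $V\in\mathbf{W}\setminus\mathbf{X}$ whose value $v$ in $\mathbf{w}$ differs from its value $v'$ in $\mathbf{w}'$, such that the lower end $l$ of the optimal bound of the normalized feature counterfactual query $P(\mathbf{w}'_{\mathbf{x}'}\mid\mathbf{w})=P(\mathbf{W}_{\mathbf{x}'}=\mathbf{w}'\mid\mathbf{W}=\mathbf{w})$, derived from $P^{\mathcal{M}^*}(\mathbf{V})$ and $\mathcal{G}$, satisfies $0<l<1$.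
   Context: SCMs, interventions $do(\mathbf{x})$, and counterfactual distributions $P^{\mathcal{M}}(\mathbf{y}_{\mathbf{x}},\dots)=\int\mathbf{1}[\mathbf{Y}_{\mathbf{x}}(\mathbf{u})=\mathbf{y},\dots]\,dP(\mathbf{u})$ are standard; the causal diagram has directed edges from arguments of mechanisms and bidirected edges between endogenous variables with dependent exogenous arguments. An ASCM is an SCM $\langle\mathbf{U},\{\mathbf{V},\mathbf{I}\},\mathcal{F},P(\mathbf{U})\rangle$ with $\mathbf{U}=\{\mathbf{U}_0,\mathbf{U}_{\mathbf{I}}\}$, observed generative factors $\mathbf{V}$ (discrete finite domains) with mechanisms depending on $\mathbf{U}_0,\mathbf{V}$, and an $m$-dimensional image $\mathbf{I}=f_{\mathbf{I}}(\mathbf{V},\mathbf{U}_{\mathbf{I}})$ with $f_{\mathbf{I}}$ invertible w.r.t. $\mathbf{V}$. The optimal bound of $P(\mathbf{w}'_{\mathbf{x}'}\mid\mathbf{w})$ derived from $P(\mathbf{V})$ and $\mathcal{G}$ is the interval $[l,r]$ with $l,r$ the minimum and maximum of $P^{\mathcal{M}}(\mathbf{W}_{\mathbf{x}'}=\mathbf{w}'\mid\mathbf{W}=\mathbf{w})$ over all SCMs $\mathcal{M}$ over $\mathbf{V}$ whose causal diagram agrees with $\mathcal{G}$ restricted to $\mathbf{V}$ and with $P^{\mathcal{M}}(\mathbf{V})=P(\mathbf{V})$. *)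

From HB Require Import structures.
From mathcomp Require Import all_boot all_order all_algebra.
From mathcomp Require Import all_classical all_reals all_analysis.
Unset Printing Implicit Defensive.
Import Order.TTheory GRing.Theory Num.Theory.
Local Open Scope classical_set_scope.
Local Open Scope ring_scope.

(* Endogenous variables V = {V_0, ..., V_(n-1)}; V_i has the finite discrete
   domain 'I_(k i).+1 (any nonempty finite domain).  A value of a subset X of V is represented by an assignment
   of which only the coordinates in X are used. *)
Definition assignment (n : nat) (k : 'I_n -> nat) := forall i : 'I_n, 'I_(k i).+1.

Arguments assignment {n}.

Definition agree_on {n} {k : 'I_n -> nat} (W : {set 'I_n}) (s t : assignment k) : Prop :=
  forall i, i \in W -> s i = t i.

Definition indep_rv (R : realType) d (Om : measurableType d) (P : probability Om R)
  d1 d2 (T1 : measurableType d1) (T2 : measurableType d2)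
  (X1 : Om -> T1) (X2 : Om -> T2) : Prop :=
  forall (A : set T1) (B : set T2), measurable A -> measurable B ->
    P (X1 @^-1` A `&` X2 @^-1` B) = (P (X1 @^-1` A) * P (X2 @^-1` B))%E.

(* The exogenous variables U live on a general
   probability space (Om, Pr); U_i : Om -> T_i is the (tuple of) exogenous
   argument(s) of the mechanism of V_i; pa i is the set of endogenous
   arguments of f_i. *)
Record SCM (R : realType) (n : nat) (k : 'I_n -> nat) := {
  scm_dO : measure_display;
  scm_Om : measurableType scm_dO;
  scm_P : probability scm_Om R;
  scm_dT : 'I_n -> measure_display;
  scm_T : forall i, measurableType (scm_dT i);
  scm_U : forall i, scm_Om -> scm_T i;
  scm_U_meas : forall i, measurable_fun setT (scm_U i);
  scm_pa : 'I_n -> {set 'I_n};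
  scm_f : forall i, assignment k -> scm_T i -> 'I_(k i).+1;
  scm_f_local : forall i (s s' : assignment k) t,
      (forall j, j \in scm_pa i -> s j = s' j) -> scm_f i s t = scm_f i s' t;
  scm_f_meas : forall i (s : assignment k) (y : 'I_(k i).+1),
      measurable [set t | scm_f i s t = y];
  scm_acyclic : exists rk : 'I_n -> nat,
      forall i j, j \in scm_pa i -> (rk j < rk i)%N
}.

Arguments scm_f {R n k} s0 i.
Arguments scm_U {R n k} s0 i.
Arguments scm_pa {R n k} s0 i.
Arguments scm_P {R n k} s0.
Arguments scm_Om {R n k} s0.
Arguments scm_T {R n k} s0 i.

Definition default_assignment {n} (k : 'I_n -> nat) : assignment k := fun i => ord0.

(* Solution of the submodel M_x (intervention do(X = x)) at exogenous outcome
   om: since the diagram is acyclic, n rounds of evaluation reach the unique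
   solution of the structural equations. *)
Arguments indep_rv {R d Om} P {d1 d2 T1 T2}.

Definition scm_sol {R n k} (M : @SCM R n k) (X : {set 'I_n}) (x : assignment k)
  (om : scm_Om M) : assignment k :=
  iter n (fun s : assignment k => fun i =>
            if i \in X then x i else scm_f M i s (scm_U M i om))
       (default_assignment k).

Definition scm_obs_sol {R n k} (M : @SCM R n k) (om : scm_Om M) : assignment k :=
  scm_sol M (finset.set0 : {set 'I_n}) (default_assignment k) om.

Definition scm_PV {R n k} (M : @SCM R n k) (v : assignment k) : \bar R :=
  scm_P M [set om | scm_obs_sol M om = v].

Definition scm_query {R n k} (M : @SCM R n k) (X : {set 'I_n}) (x' : assignment k)
  (W : {set 'I_n}) (w w' : assignment k) : R :=
  fine (scm_P M [set om | agree_on W (scm_sol M X x' om) w'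
                         /\ agree_on W (scm_obs_sol M om) w])
  / fine (scm_P M [set om | agree_on W (scm_obs_sol M om) w]).

(* Causal diagrams (ADMGs) over a finite node type N: parent sets (directed
   edges j -> i for j in gpa i) and a bidirected-edge relation. *)
Record ADMG (N : finType) := { gpa : N -> {set N}; gbi : N -> N -> Prop }.
Arguments gpa {N}.
Arguments gbi {N}.

Definition scm_dep {R n k} (M : @SCM R n k) (i j : 'I_n) : Prop :=
  ~ indep_rv (scm_P M) (scm_U M i) (scm_U M j).

Definition scm_has_diagram {R n k} (M : @SCM R n k) (G : ADMG 'I_n) : Prop :=
  (forall i, scm_pa M i = gpa G i) /\
  (forall i j, i <> j -> (scm_dep M i j <-> gbi G i j)).

(* An ASCM: an SCM over V (exogenous part U_0) together with an image node
   I = f_I(V, U_I) in R^m, f_I invertible w.r.t. V. *)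
Record ASCM (R : realType) (n : nat) (k : 'I_n -> nat) := {
  ascm_V : @SCM R n k;
  ascm_m : nat;
  ascm_dI : measure_display;
  ascm_TI : measurableType ascm_dI;
  ascm_UI : scm_Om ascm_V -> ascm_TI;
  ascm_UI_meas : measurable_fun setT ascm_UI;
  ascm_fI : assignment k -> ascm_TI -> 'rV[R]_ascm_m;
  ascm_fI_inv : exists g : 'rV[R]_ascm_m -> assignment k,
      forall v t, g (ascm_fI v t) = v
}.

(* Causal diagram of an ASCM over the nodes {V, I}: Some i is V_i, None is I. *)
Arguments ascm_V {R n k}.
Arguments ascm_UI {R n k}.

Definition ascm_diagram {R n k} (M : @ASCM R n k) : ADMG (option 'I_n) :=
  {| gpa := fun a => match a with
                     | Some i => (Some @: scm_pa (ascm_V M) i)%SET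
                     | None => (Some @: (finset.setT : {set 'I_n}))%SET
                     end;
     gbi := fun a b => match a, b with
                       | Some i, Some j => i <> j /\ scm_dep (ascm_V M) i j
                       | Some i, None | None, Some i =>
                           ~ indep_rv (scm_P (ascm_V M))
                               (scm_U (ascm_V M) i) (ascm_UI M)
                       | None, None => False
                       end |}.

Definition restrict_V {n} (G : ADMG (option 'I_n)) : ADMG 'I_n :=
  {| gpa := fun i => finset.finset (fun j : 'I_n => Some j \in gpa G (Some i));
     gbi := fun i j => gbi G (Some i) (Some j) |}.

Definition is_opt_lower_bound {R : realType} {n} {k : 'I_n -> nat}
  (G : ADMG 'I_n) (PV : assignment k -> \bar R)
  (X : {set 'I_n}) (x' : assignment k) (W : {set 'I_n}) (w w' : assignment k)
  (l : R) : Prop :=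
  (forall M : @SCM R n k, scm_has_diagram M G -> (forall v, scm_PV M v = PV v) ->
     l <= scm_query M X x' W w w') /\
  (forall l' : R, (forall M : @SCM R n k, scm_has_diagram M G ->
                     (forall v, scm_PV M v = PV v) -> l' <= scm_query M X x' W w w') ->
     l' <= l).

(* Witness: the chain X -> Y with independent fair coins U_X, U_Y and
   X = U_X, Y = X && U_Y.  In every SCM with this diagram and observational
   distribution the exogenous arguments of X and Y are independent, so the
   query P(X_{x=1} = 1, Y_{x=1} = 1 | X = 0, Y = 0) factorises as
   P(Y_0 = 0, Y_1 = 1) / P(Y_0 = 0).  As P(X = 0, Y = 1) = 0 forces Y_0 = 0
   almost surely, it equals P(Y_1 = 1) = P(Y = 1 | X = 1) = 1/2: the optimal
   bound is the single point 1/2. *)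

From HB Require Import structures.
From mathcomp Require Import all_boot all_order all_algebra.
From mathcomp Require Import all_classical all_reals all_analysis.
From mathcomp Require Import lra.
Import Order.TTheory GRing.Theory Num.Theory.
Local Open Scope classical_set_scope.
Local Open Scope ring_scope.

Section real_probability.
Context {R : realType} {d} {Om : measurableType d} (P : probability Om R).

Let pr (A : set Om) : R := fine (P A).

Let prE A : measurable A -> P A = (pr A)%:E.
Proof. by move=> mA; rewrite /pr fineK // fin_num_measure. Qed.

Lemma fine_probability_indep (A B : set Om) : measurable A -> measurable B ->
  P (A `&` B) = (P A * P B)%E -> pr (A `&` B) = pr A * pr B.
Proof. by move=> mA mB; rewrite /pr => ->; rewrite fineM // fin_num_measure. Qed.

Lemma fine_probability_setC (A : set Om) : measurable A -> pr (~` A) = 1 - pr A.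
Proof. by move=> mA; rewrite /pr probability_setC // (prE _ mA). Qed.

Lemma fine_probability_splitI (A B : set Om) : measurable A -> measurable B ->
  pr A = pr (A `&` B) + pr (A `&` ~` B).
Proof.
move=> mA mB; have mAB : measurable (A `&` B) by exact: measurableI.
have mAnB : measurable (A `&` ~` B) by apply: measurableI => //; exact: measurableC.
have disj : (A `&` B) `&` (A `&` ~` B) = set0 by rewrite setIACA setICr setI0.
have : P A = (P (A `&` B) + P (A `&` ~` B))%E.
  by rewrite -measureU // -setIUr setUv setIT.
by rewrite (prE _ mA) (prE _ mAB) (prE _ mAnB) -EFinD => -[].
Qed.

Lemma fine_probability_setI_sure (B C : set Om) : measurable B -> measurable C ->
  pr B = 1 -> pr (B `&` C) = pr C.
Proof.
move=> mB mC pB1.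
have mnB : measurable (~` B) by exact: measurableC.
have mCnB : measurable (C `&` ~` B) by exact: measurableI.
have : pr (C `&` ~` B) <= pr (~` B).
  by rewrite -lee_fin -(prE _ mCnB) -(prE _ mnB) le_measure ?inE.
rewrite fine_probability_setC // pB1 subrr => le0.
have ge0 : 0 <= pr (C `&` ~` B) by rewrite /pr fine_ge0 ?measure_ge0.
by rewrite (fine_probability_splitI _ _ mC mB) setIC; lra.
Qed.

Lemma indep_ratio_sure (a b c : set Om) :
  measurable a -> measurable b -> measurable c ->
  pr (a `&` b) = pr a * pr b -> pr (a `&` (b `&` c)) = pr a * pr (b `&` c) ->
  pr (a `&` ~` b) = 0 -> pr (a `&` b) != 0 ->
  pr (a `&` (b `&` c)) / pr (a `&` b) = pr c.
Proof.
move=> ma mb mc ab abc anb0 ab0.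
have pa : pr a = pr (a `&` b) by rewrite (fine_probability_splitI _ _ ma mb) anb0 addr0.
have pa0 : pr a != 0 by rewrite pa.
have pb1 : pr b = 1.
  by apply: (mulfI pa0); rewrite -ab -pa mulr1.
by rewrite abc ab pb1 mulr1 (fine_probability_setI_sure _ _ mb mc pb1) mulrAC divff // mul1r.
Qed.
End real_probability.

Lemma ord2_setC T (g : T -> 'I_2) : [set t | g t = ord_max] = ~` [set t | g t = ord0].
Proof.
apply/seteqP; split => t /=.
  by move=> -> /(congr1 val).
by case: (g t) => -[|[|//]] ? ne0; [case: ne0 | ]; apply/val_inj.
Qed.

Definition binary : 'I_2 -> nat := fun _ => 1%N.
Definition nodeX : 'I_2 := ord0.
Definition nodeY : 'I_2 := ord_max.
Definition assign2 (a b : 'I_2) : assignment binary := fun i => if i == nodeX then a else b.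

Lemma assign2_eq (s : assignment binary) a b :
  s = assign2 a b <-> s nodeX = a /\ s nodeY = b.
Proof.
split => [-> //|[sX sY]]; apply: functional_extensionality_dep => i.
by case: i => -[|[|//]] ?; rewrite /assign2 /= -?sX -?sY; congr s; apply/val_inj.
Qed.

Lemma agree_on_setT_assign2 (s : assignment binary) a b :
  agree_on [set: 'I_2]%SET s (assign2 a b) <-> s nodeX = a /\ s nodeY = b.
Proof.
rewrite -assign2_eq; split => [sab|-> //].
by apply: functional_extensionality_dep => i; apply: sab; rewrite inE.
Qed.

Section two_node_chain.
Variables (R : realType) (M : @SCM R 2 binary).
Hypotheses (paX : scm_pa M nodeX = finset.set0) (paY : scm_pa M nodeY = [set nodeX]%SET).

Let fX om : 'I_2 := scm_f M nodeX (default_assignment binary) (scm_U M nodeX om).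
Let fY (a : 'I_2) om : 'I_2 := scm_f M nodeY (fun _ => a) (scm_U M nodeY om).
Let eventX a := [set om | fX om = a].
Let eventY a b := [set om | fY a om = b].

Lemma obs_sol_nodeX om : scm_obs_sol M om nodeX = fX om.
Proof. by rewrite /scm_obs_sol /scm_sol /= inE; apply: scm_f_local => j; rewrite paX inE. Qed.

Lemma obs_sol_nodeY om : scm_obs_sol M om nodeY = fY (fX om) om.
Proof.
rewrite /scm_obs_sol /scm_sol /= inE; apply: scm_f_local => j.
rewrite paY inE => /eqP ->; rewrite inE; apply: scm_f_local => j'.
by rewrite paX inE.
Qed.

Lemma do_sol_nodeY x om : scm_sol M [set nodeX]%SET x om nodeY = fY (x nodeX) om.
Proof. by rewrite /scm_sol /= inE; apply: scm_f_local => j; rewrite paY inE => /eqP ->. Qed.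

Lemma scm_PV_assign2 a b : scm_PV M (assign2 a b) = scm_P M (eventX a `&` eventY a b).
Proof.
congr (scm_P M _); apply/seteqP; split => om /=.
  by move/assign2_eq; rewrite obs_sol_nodeX obs_sol_nodeY => -[<-].
by move=> [fXa fYb]; apply/assign2_eq; rewrite obs_sol_nodeX obs_sol_nodeY fXa.
Qed.

Let w0 := assign2 ord0 ord0.
Let w1 := assign2 ord_max ord_max.

Lemma query_num_event :
  [set om | agree_on [set: 'I_2]%SET (scm_sol M [set nodeX]%SET w1 om) w1
            /\ agree_on [set: 'I_2]%SET (scm_obs_sol M om) w0]
  = eventX ord0 `&` (eventY ord0 ord0 `&` eventY ord_max ord_max).
Proof.
apply/seteqP; split => om /=; rewrite !agree_on_setT_assign2 do_sol_nodeY
  obs_sol_nodeX obs_sol_nodeY.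
  by move=> [[_ Y1] [X0 Y0]]; rewrite X0 in Y0.
by move=> [X0 [Y0 Y1]]; rewrite X0 /scm_sol /= inE.
Qed.

Lemma query_den_event :
  [set om | agree_on [set: 'I_2]%SET (scm_obs_sol M om) w0]
  = eventX ord0 `&` eventY ord0 ord0.
Proof.
apply/seteqP; split => om /=; rewrite !agree_on_setT_assign2 obs_sol_nodeX obs_sol_nodeY.
  by move=> [X0 Y0]; rewrite X0 in Y0.
by move=> [X0 Y0]; rewrite X0.
Qed.

Hypothesis indepXY : indep_rv (scm_P M) (scm_U M nodeX) (scm_U M nodeY).

Let pr (A : set (scm_Om M)) : R := fine (scm_P M A).

Let measurable_preimage i (A : set (scm_T M i)) :
  measurable A -> measurable (scm_U M i @^-1` A).
Proof. by move=> mA; rewrite -[_ @^-1` _]setTI; exact: scm_U_meas. Qed.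

Let measurable_eventX a : measurable (eventX a).
Proof. exact: measurable_preimage _ _ (scm_f_meas _ _ _ M nodeX _ a). Qed.

Let measurable_eventY a b : measurable (eventY a b).
Proof. exact: measurable_preimage _ _ (scm_f_meas _ _ _ M nodeY _ b). Qed.

Let pr_indep {A : set (scm_T M nodeX)} {B : set (scm_T M nodeY)} :
  measurable A -> measurable B ->
  pr (scm_U M nodeX @^-1` A `&` scm_U M nodeY @^-1` B) =
  pr (scm_U M nodeX @^-1` A) * pr (scm_U M nodeY @^-1` B).
Proof.
move=> mA mB; apply: fine_probability_indep; try exact: measurable_preimage.
exact: indepXY.
Qed.

Theorem chain_query_half :
  scm_PV M w0 = (1/2 : R)%:E ->
  scm_PV M (assign2 ord0 ord_max) = 0%E ->
  scm_PV M w1 = (1/4 : R)%:E ->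
  scm_query M [set nodeX]%SET w1 [set: 'I_2]%SET w0 w1 = 1/2.
Proof.
rewrite !scm_PV_assign2 => PV00 PV01 PV11.
rewrite /scm_query query_num_event query_den_event.
have eventX1 : eventX ord_max = ~` eventX ord0 by exact: ord2_setC.
have eventY01 : eventY ord0 ord_max = ~` eventY ord0 ord0 by exact: ord2_setC.
have prX0 : pr (eventX ord0) = 1/2.
  rewrite /pr (fine_probability_splitI _ _ _ (measurable_eventX ord0) (measurable_eventY ord0 ord0)).
  by rewrite -eventY01 PV00 PV01 addr0.
have prY1 : pr (eventY ord_max ord_max) = 1/2.
  have : pr (eventX ord_max `&` eventY ord_max ord_max)
         = pr (eventX ord_max) * pr (eventY ord_max ord_max).
    exact: pr_indep (scm_f_meas _ _ _ M nodeX _ ord_max) (scm_f_meas _ _ _ M nodeY _ ord_max).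
  move: prX0; rewrite {2}eventX1 /pr fine_probability_setC // PV11 => -> /=; lra.
rewrite indep_ratio_sure ?prY1 //; try exact: measurable_eventX; try exact: measurable_eventY.
- exact: pr_indep (scm_f_meas _ _ _ M nodeX _ _) (scm_f_meas _ _ _ M nodeY _ _).
- exact: pr_indep (scm_f_meas _ _ _ M nodeX _ _)
    (measurableI _ _ (scm_f_meas _ _ _ M nodeY _ _) (scm_f_meas _ _ _ M nodeY _ _)).
- by rewrite -eventY01 /pr PV01.
- by rewrite /pr PV00 /=; apply/eqP; lra.
Qed.
End two_node_chain.

Definition ord_of_bool (b : bool) : 'I_2 := if b then ord_max else ord0.

Section bernoulli_half.
Context {R : realType}.
Local Notation coin := (bernoulli_prob (1/2 : R)).

Lemma bernoulli_half_set1 (b : bool) : coin [set b] = (1/2 : R)%:E.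
Proof.
rewrite /bernoulli_prob ifT; last by apply/andP; split; lra.
rewrite fsbig_set1 /bernoulli_pmf; case: b => //; congr (_%:E); lra.
Qed.

Lemma bernoulli_half_ord_of_bool (a : 'I_2) :
  coin [set t | ord_of_bool t = a] = (1/2 : R)%:E.
Proof.
rewrite -(bernoulli_half_set1 (a == ord_max)); congr coin.
by apply/seteqP; split => t /=; case: a => -[|[|//]] ?; case: t => //= *; apply/val_inj.
Qed.
End bernoulli_half.

Definition fair_coins (R : realType) : probability (bool * bool)%type R :=
  (bernoulli_prob (1/2 : R) \x bernoulli_prob (1/2 : R))%E.

Lemma fair_coins_rect (R : realType) (S1 S2 : set bool) :
  fair_coins R (fst @^-1` S1 `&` snd @^-1` S2)
  = (bernoulli_prob (1/2 : R) S1 * bernoulli_prob (1/2 : R) S2)%E.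
Proof. exact: product_measure1E. Qed.

Lemma fair_coins_indep (R : realType) : indep_rv (fair_coins R) fst snd.
Proof.
move=> A B _ _; rewrite fair_coins_rect.
have -> : fst @^-1` A = fst @^-1` A `&` snd @^-1` [set: bool] by rewrite setIT.
have -> : snd @^-1` B = fst @^-1` [set: bool] `&` snd @^-1` B by rewrite setTI.
by rewrite !fair_coins_rect probability_setT mule1 mul1e.
Qed.

Section and_model.
Variable R : realType.

Definition coin_U (i : 'I_2) (om : bool * bool) : bool := if i == nodeX then om.1 else om.2.

Lemma measurable_coin_U i : measurable_fun setT (coin_U i).
Proof. by rewrite /coin_U; case: (i == nodeX); [exact: measurable_fst | exact: measurable_snd]. Qed.

Definition chain_pa (i : 'I_2) : {set 'I_2} :=
  if i == nodeX then finset.set0 else [set nodeX]%SET.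

Definition and_f (i : 'I_2) (s : assignment binary) (t : bool) : 'I_(binary i).+1 :=
  if i == nodeX then ord_of_bool t else ord_of_bool ((s nodeX == ord_max) && t).

Lemma and_f_local i (s s' : assignment binary) t :
  (forall j, j \in chain_pa i -> s j = s' j) -> and_f i s t = and_f i s' t.
Proof. by rewrite /and_f /chain_pa; case: (i == nodeX) => //= ss'; rewrite ss' // inE. Qed.

Lemma measurable_and_f i (s : assignment binary) (y : 'I_(binary i).+1) :
  measurable [set t | and_f i s t = y].
Proof. by []. Qed.

Lemma chain_pa_acyclic : exists rk : 'I_2 -> nat, forall i j, j \in chain_pa i -> (rk j < rk i)%N.
Proof.
exists val => i j; rewrite /chain_pa; case: ifP => [_|]; first by rewrite inE.
by rewrite inE => iX /eqP ->; case: i iX => -[|[|//]].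
Qed.

Definition and_scm : @SCM R 2 binary :=
  @Build_SCM R 2 binary _ _ (fair_coins R) (fun _ => _) (fun _ => bool) coin_U
    measurable_coin_U chain_pa and_f and_f_local measurable_and_f chain_pa_acyclic.

Definition value_image (v : assignment binary) (_ : bool) : 'rV[R]_2 := \row_i (v i : nat)%:R.

Lemma value_image_inv : exists g : 'rV[R]_2 -> assignment binary, forall v t, g (value_image v t) = v.
Proof.
exists (fun r i => ord_of_bool (r ord0 i != 0)) => v t.
apply: functional_extensionality_dep => i; rewrite /value_image mxE.
by case: (v i) => -[|[|//]] ? /=; rewrite ?eqxx ?oner_eq0; apply/val_inj.
Qed.

Definition and_ascm : @ASCM R 2 binary :=
  @Build_ASCM R 2 binary and_scm 2 _ bool (fun om => om.1) measurable_fst value_image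
    value_image_inv.

Let G := restrict_V (ascm_diagram and_ascm).

Lemma and_diagram_pa i : gpa G i = chain_pa i.
Proof. by apply/setP => j; rewrite /G /= inE mem_imset //; move=> a b []. Qed.

Lemma and_scm_has_diagram : scm_has_diagram and_scm G.
Proof.
split=> [i|i j ij]; first by rewrite and_diagram_pa.
by split=> [dep|[]//]; split.
Qed.

Lemma and_scm_PV a b : scm_PV and_scm (assign2 a b) =
  (bernoulli_prob (1/2 : R) [set t | ord_of_bool t = a] *
   bernoulli_prob (1/2 : R) [set t | ord_of_bool ((a == ord_max) && t) = b])%E.
Proof. by rewrite scm_PV_assign2 //; exact: fair_coins_rect. Qed.

Lemma compatible_query_half (M : @SCM R 2 binary) :
  scm_has_diagram M G -> (forall v, scm_PV M v = scm_PV and_scm v) ->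
  scm_query M [set nodeX]%SET (assign2 ord_max ord_max) [set: 'I_2]%SET
    (assign2 ord0 ord0) (assign2 ord_max ord_max) = 1/2.
Proof.
move=> [paM depM] PVM.
have indepXY : indep_rv (scm_P M) (scm_U M nodeX) (scm_U M nodeY).
  apply: contrapT => dep.
  have [_ /= indep_and] : gbi G nodeX nodeY by apply/depM.
  exact/indep_and/fair_coins_indep.
apply: chain_query_half => //; rewrite ?paM ?and_diagram_pa // PVM and_scm_PV
  bernoulli_half_ord_of_bool.
- have -> : [set t | ord_of_bool ((ord0 == ord_max :> 'I_2) && t) = ord0] = [set: bool].
    by apply/seteqP; split => -[].
  by rewrite probability_setT mule1.
- have -> : [set t | ord_of_bool ((ord0 == ord_max :> 'I_2) && t) = ord_max] = set0.
    by apply/seteqP; split => -[].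
  by rewrite measure0 mule0.
- by rewrite -EFinM; congr (_%:E); lra.
Qed.
End and_model.

Theorem proposition2 (R : realType) :
  exists (n : nat) (k : 'I_n -> nat) (Mstar : @ASCM R n k)
         (X W : {set 'I_n}) (x' w w' : assignment k) (V : 'I_n),
    X \subset W /\ V \in W /\ V \notin X /\ w V <> w' V /\
    exists l : R,
      is_opt_lower_bound (restrict_V (ascm_diagram Mstar))
        (scm_PV (ascm_V Mstar)) X x' W w w' l /\
      0 < l /\ l < 1.
Proof.
exists 2%N, binary, (and_ascm R), [set nodeX]%SET, [set: 'I_2]%SET,
  (assign2 ord_max ord_max), (assign2 ord0 ord0), (assign2 ord_max ord_max), nodeY.
do 4 (split; first by rewrite ?subsetT ?inE).
exists (1/2); split; last by split; lra.
split=> [M MG MPV | l lowM]; first by rewrite compatible_query_half.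
have := lowM _ (and_scm_has_diagram R) (fun=> erefl).
by rewrite (compatible_query_half _ _ (and_scm_has_diagram R)).
Qed.
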